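(* Let $V$ be $\eta_*$-regular and $\mu_V=\frac1N\sum_i\delta_{V_i}$. For every $p\ge2$ and every $a+bi\in\mathcal D_*$: if $a\ge0$ then $\displaystyle\int\frac{d\mu_V(x)}{|x-a-bi|^p}\asymp\frac{\sqrt{a+b}}{b^{p-1}}$; if $a\le0$ then $\displaystyle\int\frac{d\mu_V(x)}{|x-a-bi|^p}\asymp\frac{1}{(|a|+b)^{p-3/2}}$.
   Context: $V=\mathrm{diag}(V_1\le\dots\le V_N)$ deterministic real, $m_V(z)=\frac1N\sum_i(V_i-z)^{-1}$. $V$ is $\eta_*$-regular ($\eta_*=N^{-\phi_*}$, $0<\phi_*\le2/3$) if for some $C_V$: $C_V^{-1}\frac{\eta}{\sqrt{|E|+\eta}}\le\mathrm{Im}\,m_V(E+i\eta)\le C_V\frac{\eta}{\sqrt{|E|+\eta}}$ for $-1\le E\le0$, $\eta_*\le\eta\le10$; $C_V^{-1}\sqrt{|E|+\eta}\le\mathrm{Im}\,m_V\le C_V\sqrt{|E|+\eta}$ for $0\le E\le1$, $\eta_*^{1/2}\sqrt{|E|}+\eta_*\le\eta\le10$; no $V_i\in[-1,-\eta_*]$; $\|V\|\le N^{C_V}$. $\mathcal D_*=\{E+i\eta:-3/4\le E\le0,\,2\eta_*\le\eta\le10\}\cup\{E+i\eta:0\le E\le3/4,\,\eta_*^{1/2}\sqrt{|E|}+\eta_*\le\eta\le10\}\cup\{E+i\eta:-3/4\le E\le-2\eta_*,\,0\le\eta\le10\}$. $\asymp$ holds with constants depending only on $C_V$ and $p$. *)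

From Stdlib Require Import Reals Lra.
Open Scope R_scope.

Fixpoint sumN (N : nat) (f : nat -> R) : R :=
  match N with
  | O => 0
  | S n => sumN n f + f n
  end.

Definition eta_star (N : nat) (phi : R) : R := Rpower (INR N) (- phi).

(* Im m_V(E + i eta), with m_V(z) = (1/N) sum_i (V_i - z)^{-1}, written out:
   Im (V_i - E - i eta)^{-1} = eta / ((V_i - E)^2 + eta^2). *)
Definition Im_mV (N : nat) (V : nat -> R) (E eta : R) : R :=
  / INR N * sumN N (fun i => eta / ((V i - E)^2 + eta^2)).

(* V = diag(V_0 <= ... <= V_{N-1}) is eta_*-regular with constant CV *)
Definition regular (N : nat) (phi CV : R) (V : nat -> R) : Prop :=
  let es := eta_star N phi in
  (forall i j, (i <= j < N)%nat -> V i <= V j) /\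
  (forall E eta, -1 <= E <= 0 -> es <= eta <= 10 ->
     / CV * (eta / sqrt (Rabs E + eta)) <= Im_mV N V E eta /\
     Im_mV N V E eta <= CV * (eta / sqrt (Rabs E + eta))) /\
  (forall E eta, 0 <= E <= 1 -> sqrt es * sqrt (Rabs E) + es <= eta <= 10 ->
     / CV * sqrt (Rabs E + eta) <= Im_mV N V E eta /\
     Im_mV N V E eta <= CV * sqrt (Rabs E + eta)) /\
  (forall i, (i < N)%nat -> ~ (-1 <= V i <= - es)) /\
  (forall i, (i < N)%nat -> Rabs (V i) <= Rpower (INR N) CV).

Definition InDstar (es E eta : R) : Prop :=
  (-3/4 <= E <= 0 /\ 2 * es <= eta <= 10) \/
  (0 <= E <= 3/4 /\ sqrt es * sqrt (Rabs E) + es <= eta <= 10) \/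
  (-3/4 <= E <= - 2 * es /\ 0 <= eta <= 10).

Definition moment (N : nat) (V : nat -> R) (p a b : R) : R :=
  / INR N * sumN N (fun i => / Rpower (sqrt ((V i - a)^2 + b^2)) p).

Definition asymp (C X Y : R) : Prop := / C * Y <= X /\ X <= C * Y.

(* Write [poisson y eta = eta / (y^2 + eta^2)], so that [Im m_V (a + i eta)] is the
   mu_V-average of [poisson (V_i - a) eta], and let [z = a + i b].

   Upper bounds: if [|V_i - z| >= c] and [(V_i - a)^2 + eta^2 <= k |V_i - z|^2] for all i,
   then [|V_i - z|^-p <= c^(2-p) (k / eta) poisson (V_i - a) eta], so the moment is at most
   [c^(2-p) (k / eta) Im m_V (a + i eta)].  Take [c = eta = b] when [a >= 0]; when [a < 0]
   put [d = |a| + b], use the gap [-1, -eta_*] of the spectrum to get [|V_i - z| >= d / 4],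
   and take [eta = d / 2].

   Lower bounds: split the average defining [Im m_V (a + i eta)] at [|V_i - a| = K eta].
   Far points contribute at most [(2 / K) Im m_V (a + i K eta)], which by regularity is a
   small fraction of [Im m_V (a + i eta)] once [K = 64 C_V^4]; near points satisfy
   [|V_i - z| <= R] with [R ~ eta + b] and contribute at most [R^p / eta] times the moment.
   With [eta = b] (resp. [d / 2]) this gives the claim as long as [K eta <= 10]; otherwise
   the target is bounded by a constant and the same splitting at [eta = 10] suffices. *)

From Stdlib Require Import Reals Lra Lia Psatz.
Open Scope R_scope.

Lemma Rdiv_le_of_le_mul x y z : 0 < y -> x <= z * y -> x / y <= z.
Proof.
  intros Hy Hxz. apply Rmult_le_reg_r with y; [exact Hy|].
  unfold Rdiv. rewrite Rmult_assoc, Rinv_l, Rmult_1_r by lra. exact Hxz.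
Qed.

Lemma Rle_div_of_mul_le x y z : 0 < y -> x * y <= z -> x <= z / y.
Proof.
  intros Hy Hxz. apply Rmult_le_reg_r with y; [exact Hy|].
  unfold Rdiv. rewrite Rmult_assoc, Rinv_l, Rmult_1_r by lra. exact Hxz.
Qed.

Lemma Rdiv_le_Rdiv_cross a b c d : 0 < b -> 0 < d -> a * d <= c * b -> a / b <= c / d.
Proof.
  intros Hb Hd Hac. apply Rdiv_le_of_le_mul; [exact Hb|].
  replace (c / d * b) with (c * b / d) by (field; lra). now apply Rle_div_of_mul_le.
Qed.

Lemma le_div_of_absorb l u S X : u < l -> l * S <= u * S + X -> S <= X / (l - u).
Proof. intros Hul HS. apply Rle_div_of_mul_le; lra. Qed.

Lemma Rdiv_Rdiv_le T k P F M : 0 < P -> 0 < F -> T <= k / P -> k / F <= M -> T / (F / P) <= M.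
Proof.
  intros HP HF HT Hk. replace (T / (F / P)) with (T * P / F) by (field; lra).
  apply Rle_trans with (k / F); [|exact Hk].
  unfold Rdiv. apply Rmult_le_compat_r; [left; now apply Rinv_0_lt_compat|].
  apply Rmult_le_compat_r with (r := P) in HT; [|lra].
  now replace (k / P * P) with k in HT by (field; lra).
Qed.

Lemma Rdiv_add_le T c1 c2 M :
  0 <= T -> 0 < c1 -> 0 < c2 -> T / c1 <= M \/ T / c2 <= M -> T / (c1 + c2) <= M.
Proof.
  intros HT Hc1 Hc2 HM.
  assert (T / (c1 + c2) <= T / c1 /\ T / (c1 + c2) <= T / c2) as [H1 H2].
  { split; unfold Rdiv; apply Rmult_le_compat_l; auto; apply Rinv_le_contravar; lra. }
  destruct HM; lra.
Qed.

Lemma asymp_of_bounds C cl cu X T :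
  0 <= T -> 0 < cl <= C -> cu <= C -> T / cl <= X -> X <= cu * T -> asymp C X T.
Proof.
  intros HT Hcl Hcu Hlow Hup. split.
  - apply Rle_trans with (2 := Hlow). unfold Rdiv. rewrite Rmult_comm.
    apply Rmult_le_compat_l; [exact HT|]. apply Rinv_le_contravar; lra.
  - apply Rle_trans with (1 := Hup). now apply Rmult_le_compat_r.
Qed.

Lemma Rpower_pos x y : 0 < Rpower x y.
Proof. apply exp_pos. Qed.

Lemma Rpower_add_1 x q : 0 < x -> Rpower x (q + 1) = Rpower x q * x.
Proof. intros Hx. now rewrite Rpower_plus, Rpower_1. Qed.

Lemma Rpower_add_half x q : 0 < x -> Rpower x (q + / 2) = Rpower x q * sqrt x.
Proof. intros Hx. now rewrite Rpower_plus, Rpower_sqrt. Qed.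

Lemma sqrt_le_mul_sqrt x y c : 0 <= c -> 0 <= y -> x <= c ^ 2 * y -> sqrt x <= c * sqrt y.
Proof.
  intros Hc Hy Hxy. rewrite <- (sqrt_pow2 c Hc), <- sqrt_mult_alt by apply pow2_ge_0.
  now apply sqrt_le_1_alt.
Qed.

Lemma div_sqrt_le_sqrt x y : 0 < x <= y -> x / sqrt y <= sqrt x.
Proof.
  intros Hxy. assert (Hx : 0 < sqrt x) by (apply sqrt_lt_R0; lra).
  assert (sqrt x <= sqrt y) by (apply sqrt_le_1_alt; lra).
  apply Rdiv_le_of_le_mul; [lra|].
  rewrite <- (sqrt_sqrt x) at 1 by lra. now apply Rmult_le_compat_l; [lra|].
Qed.

Lemma sumN_le N f g : (forall i, (i < N)%nat -> f i <= g i) -> sumN N f <= sumN N g.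
Proof.
  induction N as [|N IH]; intros Hfg; simpl; [lra|].
  apply Rplus_le_compat; [apply IH; intros; apply Hfg|apply Hfg]; lia.
Qed.

Lemma sumN_add N f g : sumN N (fun i => f i + g i) = sumN N f + sumN N g.
Proof. induction N as [|N IH]; simpl; [|rewrite IH]; ring. Qed.

Lemma sumN_scal N c f : sumN N (fun i => c * f i) = c * sumN N f.
Proof. induction N as [|N IH]; simpl; [|rewrite IH]; ring. Qed.

Lemma sumN_const N c : sumN N (fun _ => c) = INR N * c.
Proof. induction N as [|N IH]; simpl sumN; [simpl; ring|]. rewrite IH, S_INR. ring. Qed.

Definition mean (N : nat) (f : nat -> R) : R := / INR N * sumN N f.

Lemma mean_le N f g : (forall i, (i < N)%nat -> f i <= g i) -> mean N f <= mean N g.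
Proof.
  intros Hfg. unfold mean. destruct N as [|N]; [simpl; lra|].
  apply Rmult_le_compat_l; [|now apply sumN_le].
  left. apply Rinv_0_lt_compat, lt_0_INR. lia.
Qed.

Lemma mean_add N f g : mean N (fun i => f i + g i) = mean N f + mean N g.
Proof. unfold mean. rewrite sumN_add. ring. Qed.

Lemma mean_scal N c f : mean N (fun i => c * f i) = c * mean N f.
Proof. unfold mean. rewrite sumN_scal. ring. Qed.

Lemma mean_const N c : (0 < N)%nat -> mean N (fun _ => c) = c.
Proof.
  intros HN. unfold mean. rewrite sumN_const.
  assert (0 < INR N) by (apply lt_0_INR; lia). field. lra.
Qed.

Definition poisson (y eta : R) : R := eta / (y ^ 2 + eta ^ 2).

Lemma Im_mV_mean N V E eta : Im_mV N V E eta = mean N (fun i => poisson (V i - E) eta).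
Proof. reflexivity. Qed.

Lemma moment_mean N V p a b :
  moment N V p a b = mean N (fun i => / Rpower (sqrt ((V i - a) ^ 2 + b ^ 2)) p).
Proof. reflexivity. Qed.

Lemma poisson_nonneg y eta : 0 < eta -> 0 <= poisson y eta.
Proof.
  intros He. unfold poisson. left. apply Rdiv_lt_0_compat; [lra|].
  pose proof (pow2_ge_0 y). nra.
Qed.

Lemma poisson_le_inv y eta : 0 < eta -> poisson y eta <= / eta.
Proof.
  intros He. replace (/ eta) with (eta / eta ^ 2) by (field; lra).
  unfold poisson, Rdiv. apply Rmult_le_compat_l; [lra|].
  apply Rinv_le_contravar; [nra|]. pose proof (pow2_ge_0 y). lra.
Qed.

Lemma poisson_le_tail y eta T : 0 < eta -> 0 < T <= y ^ 2 -> poisson y eta <= eta / T.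
Proof.
  intros He HT. unfold poisson, Rdiv. apply Rmult_le_compat_l; [lra|].
  apply Rinv_le_contravar; nra.
Qed.

Lemma poisson_le_dilate y eta K :
  0 < eta -> 0 < K -> (K * eta) ^ 2 <= y ^ 2 -> poisson y eta <= 2 / K * poisson y (K * eta).
Proof.
  intros He HK Hy. unfold poisson.
  assert (HKe : 0 < (K * eta) ^ 2) by (apply pow_lt; nra).
  pose proof (pow2_ge_0 y).
  replace (2 / K * (K * eta / (y ^ 2 + (K * eta) ^ 2))) with
    ((2 * eta) / (y ^ 2 + (K * eta) ^ 2)) by (field; split; lra).
  apply Rdiv_le_Rdiv_cross; nra.
Qed.

(* Far points ([T <= y^2]) are controlled by [g]; near points satisfy [|x - z| <= R],
   and there [poisson y eta <= 1 / eta] is dominated by the moment term. *)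
Lemma poisson_le_far_near y b eta T R p g :
  0 < eta -> 0 < R -> 0 <= p -> 0 <= g -> 0 < y ^ 2 + b ^ 2 -> T + b ^ 2 <= R ^ 2 ->
  (T <= y ^ 2 -> poisson y eta <= g) ->
  poisson y eta <= g + Rpower R p / eta * / Rpower (sqrt (y ^ 2 + b ^ 2)) p.
Proof.
  intros He HR Hp Hg Hyb HTR Hfar.
  set (r := sqrt (y ^ 2 + b ^ 2)).
  assert (Hr : 0 < r) by (apply sqrt_lt_R0; lra).
  assert (Hnear : 0 <= Rpower R p / eta * / Rpower r p).
  { left. apply Rmult_lt_0_compat; [apply Rdiv_lt_0_compat|apply Rinv_0_lt_compat];
      auto using Rpower_pos. }
  destruct (Rle_lt_dec T (y ^ 2)) as [HyT|HyT]; [specialize (Hfar HyT); lra|].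
  assert (HrR : r <= R) by (rewrite <- (sqrt_pow2 R) by lra; apply sqrt_le_1_alt; lra).
  assert (HpR : Rpower r p <= Rpower R p) by (apply Rle_Rpower_l; lra).
  pose proof (Rpower_pos r p).
  apply Rle_trans with (Rpower R p / eta * / Rpower r p); [|lra].
  apply Rle_trans with (/ eta); [now apply poisson_le_inv|].
  replace (Rpower R p / eta * / Rpower r p) with (/ eta * (Rpower R p / Rpower r p))
    by (field; lra).
  rewrite <- (Rmult_1_r (/ eta)) at 1.
  apply Rmult_le_compat_l; [left; now apply Rinv_0_lt_compat|].
  apply Rle_div_of_mul_le; lra.
Qed.

Lemma inv_Rpower_le_poisson y r c eta k p :
  0 < c <= r -> 0 < eta -> 2 <= p -> y ^ 2 + eta ^ 2 <= k * r ^ 2 ->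
  / Rpower r p <= / Rpower c (p - 2) * (k / eta) * poisson y eta.
Proof.
  intros Hcr He Hp Hk.
  assert (Hpow : Rpower r p = Rpower r (p - 2) * r ^ 2).
  { replace p with (p - 2 + 1 + 1) at 1 by ring. rewrite !Rpower_add_1 by lra. ring. }
  assert (Hcr' : Rpower c (p - 2) <= Rpower r (p - 2)) by (apply Rle_Rpower_l; lra).
  pose proof (Rpower_pos c (p - 2)). pose proof (pow2_ge_0 y).
  replace (/ Rpower c (p - 2) * (k / eta) * poisson y eta) with
    (/ Rpower c (p - 2) * (k / (y ^ 2 + eta ^ 2))) by (unfold poisson; field; nra).
  rewrite Hpow, Rinv_mult.
  apply Rmult_le_compat; try (left; apply Rinv_0_lt_compat; nra).
  - now apply Rinv_le_contravar.
  - assert (0 < r ^ 2) by (apply pow_lt; lra).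
    replace (/ r ^ 2) with (1 / r ^ 2) by (field; lra).
    apply Rdiv_le_Rdiv_cross; nra.
Qed.

Definition far_const (CV p : R) : R := CV * Rpower (sqrt (10 * CV + 100)) p.

Lemma far_const_pos CV p : 0 < CV -> 0 < far_const CV p.
Proof. intros HCV. apply Rmult_lt_0_compat; [exact HCV|apply Rpower_pos]. Qed.

Section Averages.
Variables (N : nat) (V : nat -> R) (a b : R).
Hypotheses (HN : (0 < N)%nat) (Hdist : forall i, (i < N)%nat -> 0 < (V i - a) ^ 2 + b ^ 2).

Lemma Im_mV_le_dilate_moment eta K R p :
  0 < eta -> 0 < K -> 0 < R -> 0 <= p -> (K * eta) ^ 2 + b ^ 2 <= R ^ 2 ->
  Im_mV N V a eta <= 2 / K * Im_mV N V a (K * eta) + Rpower R p / eta * moment N V p a b.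
Proof.
  intros He HK HR Hp HRb.
  rewrite !Im_mV_mean, moment_mean, <- !mean_scal, <- mean_add.
  apply mean_le. intros i Hi.
  apply poisson_le_far_near with (T := (K * eta) ^ 2); auto.
  - apply Rmult_le_pos; [left; apply Rdiv_lt_0_compat; lra|].
    apply poisson_nonneg. nra.
  - now apply poisson_le_dilate.
Qed.

Lemma Im_mV_le_tail_moment eta T R p :
  0 < eta -> 0 < T -> 0 < R -> 0 <= p -> T + b ^ 2 <= R ^ 2 ->
  Im_mV N V a eta <= eta / T + Rpower R p / eta * moment N V p a b.
Proof.
  intros He HT HR Hp HRb.
  rewrite Im_mV_mean, moment_mean, <- mean_scal, <- (mean_const N (eta / T)) by exact HN.
  rewrite <- mean_add. apply mean_le. intros i Hi.
  apply poisson_le_far_near with (T := T); auto.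
  - left. apply Rdiv_lt_0_compat; lra.
  - intros HyT. apply poisson_le_tail; lra.
Qed.

Lemma moment_ge_far CV p :
  0 < CV -> 0 <= p -> b ^ 2 <= 100 -> 3 / CV <= Im_mV N V a 10 ->
  20 / far_const CV p <= moment N V p a b.
Proof.
  intros HCV Hp Hb HIm. unfold far_const.
  set (R := sqrt (10 * CV + 100)).
  assert (HR : 0 < R) by (apply sqrt_lt_R0; lra).
  assert (HR2 : R ^ 2 = 10 * CV + 100) by (apply pow2_sqrt; lra).
  pose proof (Im_mV_le_tail_moment 10 (10 * CV) R p ltac:(lra) ltac:(lra) HR Hp ltac:(lra))
    as Htail.
  replace (10 / (10 * CV)) with (1 / CV) in Htail by (field; lra).
  pose proof (Rpower_pos R p).
  apply Rdiv_le_of_le_mul; [nra|].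
  assert (H2 : 2 / CV <= Rpower R p / 10 * moment N V p a b) by lra.
  apply Rmult_le_compat_r with (r := CV * 10) in H2; [|lra].
  replace (2 / CV * (CV * 10)) with 20 in H2 by (field; lra).
  replace (Rpower R p / 10 * moment N V p a b * (CV * 10)) with
    (moment N V p a b * (CV * Rpower R p)) in H2 by (field; lra).
  exact H2.
Qed.

Lemma moment_le_Im_mV c eta k p :
  0 < c -> 0 < eta -> 2 <= p ->
  (forall i, (i < N)%nat -> c ^ 2 <= (V i - a) ^ 2 + b ^ 2 /\
     (V i - a) ^ 2 + eta ^ 2 <= k * ((V i - a) ^ 2 + b ^ 2)) ->
  moment N V p a b <= / Rpower c (p - 2) * (k / eta) * Im_mV N V a eta.
Proof.
  intros Hc He Hp Hbound.
  rewrite Im_mV_mean, moment_mean, <- mean_scal. apply mean_le. intros i Hi.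
  destruct (Hbound i Hi) as [Hci Hki].
  assert (Hsq : 0 <= (V i - a) ^ 2 + b ^ 2) by nra.
  apply inv_Rpower_le_poisson; auto.
  - split; [exact Hc|]. rewrite <- (sqrt_pow2 c) by lra. now apply sqrt_le_1_alt.
  - now rewrite pow2_sqrt.
Qed.

End Averages.

Definition dilation (CV : R) : R := 64 * CV ^ 4.

Lemma dilation_ge_64 CV : 1 <= CV -> 64 <= dilation CV.
Proof. intros HCV. unfold dilation. pose proof (pow_R1_Rle CV 4 HCV). lra. Qed.

Definition pos_lower_const (CV p : R) : R :=
  2 * CV * Rpower (sqrt (dilation CV ^ 2 + 1)) p
  + far_const CV p / Rpower (10 / dilation CV) (p - 1).

Lemma pos_lower_const_pos CV p : 0 < CV -> 0 < pos_lower_const CV p.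
Proof.
  intros HCV. unfold pos_lower_const. pose proof (far_const_pos CV p HCV).
  apply Rplus_lt_0_compat; [apply Rmult_lt_0_compat; [lra|]|apply Rdiv_lt_0_compat; [lra|]];
    apply Rpower_pos.
Qed.

Section PositiveSide.
Variables (CV p es a b : R) (N : nat) (V : nat -> R).
Hypotheses (HCV : 1 <= CV) (Hp : 2 <= p) (HN : (0 < N)%nat) (Hes : 0 < es)
  (Ha : 0 <= a <= 3/4) (Hb : sqrt es * sqrt a + es <= b <= 10)
  (Hreg : forall E eta, 0 <= E <= 1 -> sqrt es * sqrt (Rabs E) + es <= eta <= 10 ->
     / CV * sqrt (Rabs E + eta) <= Im_mV N V E eta /\ Im_mV N V E eta <= CV * sqrt (Rabs E + eta)).

Let K := dilation CV.

Lemma pos_b_gt0 : 0 < b.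
Proof. pose proof (Rmult_le_pos _ _ (sqrt_pos es) (sqrt_pos a)). lra. Qed.

Lemma pos_dist_gt0 i : 0 < (V i - a) ^ 2 + b ^ 2.
Proof. pose proof (pow2_ge_0 (V i - a)). pose proof pos_b_gt0. nra. Qed.

Lemma pos_Im_bounds eta : b <= eta <= 10 ->
  / CV * sqrt (a + eta) <= Im_mV N V a eta /\ Im_mV N V a eta <= CV * sqrt (a + eta).
Proof.
  intros He. pose proof (Hreg a eta) as H. rewrite Rabs_right in H by lra. apply H; lra.
Qed.

Lemma moment_le_pos : moment N V p a b <= CV * (sqrt (a + b) / Rpower b (p - 1)).
Proof.
  pose proof pos_b_gt0 as Hb0.
  eapply Rle_trans.
  { apply (moment_le_Im_mV N V a b b b 1 p); auto.
    intros i _. pose proof (pow2_ge_0 (V i - a)). lra. }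
  destruct (pos_Im_bounds b) as [_ Hup]; [lra|].
  replace (p - 1) with (p - 2 + 1) by ring. rewrite Rpower_add_1 by exact Hb0.
  pose proof (Rpower_pos b (p - 2)).
  replace (CV * (sqrt (a + b) / (Rpower b (p - 2) * b))) with
    (/ Rpower b (p - 2) * (1 / b) * (CV * sqrt (a + b))) by (field; lra).
  apply Rmult_le_compat_l; [|exact Hup].
  left. apply Rmult_lt_0_compat; [apply Rinv_0_lt_compat|apply Rdiv_lt_0_compat]; lra.
Qed.

Lemma moment_ge_pos_near : K * b <= 10 ->
  sqrt (a + b) / Rpower b (p - 1) / (2 * CV * Rpower (sqrt (K ^ 2 + 1)) p) <= moment N V p a b.
Proof.
  intros HKb. pose proof pos_b_gt0 as Hb0.
  assert (HK : 64 <= K) by apply dilation_ge_64, HCV.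
  set (S := sqrt (a + b)). set (A := Rpower (sqrt (K ^ 2 + 1)) p).
  set (P := Rpower b (p - 1)). set (M := moment N V p a b).
  assert (HS : 0 <= S) by apply sqrt_pos.
  assert (HA : 0 < A) by apply Rpower_pos. assert (HP : 0 < P) by apply Rpower_pos.
  assert (HR : 0 < sqrt (K ^ 2 + 1)) by (apply sqrt_lt_R0; nra).
  assert (HRb : (K * b) ^ 2 + b ^ 2 <= (sqrt (K ^ 2 + 1) * b) ^ 2).
  { rewrite !Rpow_mult_distr, pow2_sqrt by nra. nra. }
  pose proof (Im_mV_le_dilate_moment N V a b (fun i _ => pos_dist_gt0 i) b K
    (sqrt (K ^ 2 + 1) * b) p Hb0 ltac:(lra) ltac:(nra) ltac:(lra) HRb) as Hsplit.
  rewrite <- Rpower_mult_distr in Hsplit by lra.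
  replace (Rpower b p) with (P * b) in Hsplit
    by (unfold P; rewrite <- Rpower_add_1 by lra; f_equal; ring).
  fold A M in Hsplit.
  destruct (pos_Im_bounds b) as [Hlow _]; [lra|]. fold S in Hlow.
  destruct (pos_Im_bounds (K * b)) as [_ Hhigh]; [nra|].
  (* [sqrt (a + K b) <= sqrt K * sqrt (a + b)] and [sqrt K = 8 CV^2]. *)
  assert (Hdil : 2 / K * Im_mV N V a (K * b) <= / (4 * CV) * S).
  { assert (sqrt (a + K * b) <= 8 * CV ^ 2 * S).
    { apply sqrt_le_mul_sqrt; [nra|lra|].
      replace ((8 * CV ^ 2) ^ 2) with K by (unfold K, dilation; ring). nra. }
    apply Rle_trans with (2 / K * (CV * (8 * CV ^ 2 * S))).
    - apply Rmult_le_compat_l; [left; apply Rdiv_lt_0_compat; lra|].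
      apply Rle_trans with (CV * sqrt (a + K * b)); [exact Hhigh|].
      apply Rmult_le_compat_l; lra.
    - right. unfold K, dilation. field. lra. }
  assert (HSM : S <= A * (P * b) / b * M / (/ CV - / (4 * CV))).
  { apply le_div_of_absorb; [apply Rinv_lt_contravar; nra|lra]. }
  replace (A * (P * b) / b * M / (/ CV - / (4 * CV))) with (4 / 3 * CV * (A * P * M)) in HSM
    by (field; lra).
  apply Rdiv_le_of_le_mul; [nra|]. apply Rdiv_le_of_le_mul; [exact HP|].
  assert (0 <= CV * (A * P * M)) by nra.
  nra.
Qed.

Lemma moment_ge_pos_far : 10 < K * b ->
  sqrt (a + b) / Rpower b (p - 1) / (far_const CV p / Rpower (10 / K) (p - 1))
    <= moment N V p a b.
Proof.
  intros HKb. pose proof pos_b_gt0 as Hb0.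
  assert (HK : 64 <= K) by apply dilation_ge_64, HCV.
  assert (HF : 0 < far_const CV p) by (apply far_const_pos; lra).
  apply Rdiv_Rdiv_le with (k := 4); [apply Rpower_pos|exact HF| |].
  - assert (sqrt (a + b) <= 4) by (rewrite <- (sqrt_pow2 4) by lra; apply sqrt_le_1_alt; lra).
    assert (Rpower (10 / K) (p - 1) <= Rpower b (p - 1)).
    { apply Rle_Rpower_l; [lra|split; [apply Rdiv_lt_0_compat; lra|]].
      apply Rdiv_le_of_le_mul; lra. }
    pose proof (Rpower_pos (10 / K) (p - 1)).
    unfold Rdiv. apply Rmult_le_compat; [apply sqrt_pos| |lra|now apply Rinv_le_contravar].
    left. apply Rinv_0_lt_compat, Rpower_pos.
  - apply Rle_trans with (20 / far_const CV p).
    { unfold Rdiv. apply Rmult_le_compat_r; [left; now apply Rinv_0_lt_compat|lra]. }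
    apply moment_ge_far; [exact HN|intros i _; apply pos_dist_gt0|lra|lra|nra|].
    destruct (pos_Im_bounds 10) as [Hlow _]; [lra|].
    assert (3 <= sqrt (a + 10)) by (rewrite <- (sqrt_pow2 3) by lra; apply sqrt_le_1_alt; lra).
    apply Rle_trans with (/ CV * sqrt (a + 10)); [|exact Hlow].
    unfold Rdiv. rewrite Rmult_comm. apply Rmult_le_compat_l; [left; apply Rinv_0_lt_compat|]; lra.
Qed.

Lemma moment_ge_pos :
  sqrt (a + b) / Rpower b (p - 1) / pos_lower_const CV p <= moment N V p a b.
Proof.
  apply Rdiv_add_le.
  - apply Rmult_le_pos; [apply sqrt_pos|left; apply Rinv_0_lt_compat, Rpower_pos].
  - apply Rmult_lt_0_compat; [lra|apply Rpower_pos].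
  - apply Rdiv_lt_0_compat; [apply far_const_pos; lra|apply Rpower_pos].
  - destruct (Rle_lt_dec (K * b) 10).
    + left. now apply moment_ge_pos_near.
    + right. now apply moment_ge_pos_far.
Qed.

Lemma moment_asymp_pos C : CV <= C -> pos_lower_const CV p <= C ->
  asymp C (moment N V p a b) (sqrt (a + b) / Rpower b (p - 1)).
Proof.
  intros HC1 HC2. apply asymp_of_bounds with (pos_lower_const CV p) CV;
    auto using moment_le_pos, moment_ge_pos.
  - apply Rmult_le_pos; [apply sqrt_pos|left; apply Rinv_0_lt_compat, Rpower_pos].
  - split; [apply pos_lower_const_pos; lra|exact HC2].
Qed.

End PositiveSide.

Definition neg_upper_const (CV p : R) : R := 10 * CV * Rpower 4 (p - 2).

Definition neg_lower_const (CV p : R) : R :=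
  24 * CV * Rpower (sqrt (dilation CV ^ 2 / 4 + 1)) p
  + far_const CV p / Rpower (20 / dilation CV) (p - 3/2).

Lemma neg_upper_const_pos CV p : 0 < CV -> 0 < neg_upper_const CV p.
Proof.
  intros HCV. unfold neg_upper_const. apply Rmult_lt_0_compat; [lra|apply Rpower_pos].
Qed.

Lemma neg_lower_const_pos CV p : 0 < CV -> 0 < neg_lower_const CV p.
Proof.
  intros HCV. unfold neg_lower_const. pose proof (far_const_pos CV p HCV).
  apply Rplus_lt_0_compat; [apply Rmult_lt_0_compat; [lra|]|apply Rdiv_lt_0_compat; [lra|]];
    apply Rpower_pos.
Qed.

Section NegativeSide.
Variables (CV p es a b : R) (N : nat) (V : nat -> R).
Hypotheses (HCV : 1 <= CV) (Hp : 2 <= p) (HN : (0 < N)%nat) (Hes : 0 < es)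
  (Ha : -3/4 <= a <= 0) (Hb : 0 <= b <= 10) (Hdom : 2 * es <= b \/ a <= - 2 * es)
  (Hgap : forall i, (i < N)%nat -> ~ (-1 <= V i <= - es))
  (Hreg : forall E eta, -1 <= E <= 0 -> es <= eta <= 10 ->
     / CV * (eta / sqrt (Rabs E + eta)) <= Im_mV N V E eta /\
     Im_mV N V E eta <= CV * (eta / sqrt (Rabs E + eta))).

Let K := dilation CV.
Let d := Rabs a + b.

Lemma neg_d_eq : d = b - a.
Proof. unfold d. rewrite Rabs_left1 by lra. ring. Qed.

Lemma neg_d_ge : 2 * es <= d.
Proof. rewrite neg_d_eq. lra. Qed.

(* By the spectral gap, either [V i < -1], hence [|V i - a| >= 1/4], or [V i > -es]. *)
Lemma neg_dist_le i : (i < N)%nat -> d ^ 2 <= 16 * ((V i - a) ^ 2 + b ^ 2).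
Proof.
  intros Hi. rewrite neg_d_eq. pose proof (pow2_ge_0 (V i - a)).
  destruct (Rlt_le_dec (V i) (-1)) as [Hfar|Hnear].
  - assert (1 / 16 <= (V i - a) ^ 2) by nra. nra.
  - assert (Hgi : - es < V i) by (apply Rnot_le_lt; intro; apply (Hgap i Hi); lra).
    destruct (Rle_lt_dec a (-2 * es)).
    + assert (a ^ 2 / 4 <= (V i - a) ^ 2) by nra. nra.
    + destruct Hdom as [Hbes|]; [nra|lra].
Qed.

Lemma neg_dist_gt0 i : (i < N)%nat -> 0 < (V i - a) ^ 2 + b ^ 2.
Proof. intros Hi. pose proof (neg_dist_le i Hi). pose proof neg_d_ge. nra. Qed.

Lemma neg_Im_bounds eta : es <= eta <= 10 ->
  / CV * (eta / sqrt (- a + eta)) <= Im_mV N V a eta /\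
  Im_mV N V a eta <= CV * (eta / sqrt (- a + eta)).
Proof.
  intros He. pose proof (Hreg a eta) as H. rewrite Rabs_left1 in H by lra. apply H; lra.
Qed.

Lemma neg_Im_le_sqrt eta : es <= eta <= 10 -> Im_mV N V a eta <= CV * sqrt eta.
Proof.
  intros He. destruct (neg_Im_bounds eta He) as [_ Hup].
  apply Rle_trans with (1 := Hup). apply Rmult_le_compat_l; [lra|].
  apply div_sqrt_le_sqrt. lra.
Qed.

Lemma moment_le_neg : moment N V p a b <= neg_upper_const CV p * / Rpower d (p - 3/2).
Proof.
  pose proof neg_d_ge as Hd. rewrite neg_d_eq in Hd |- *.
  eapply Rle_trans.
  { apply (moment_le_Im_mV N V a b ((b - a) / 4) ((b - a) / 2) 5 p); [lra|lra|lra|].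
    intros i Hi. pose proof (neg_dist_le i Hi) as Hi'. rewrite neg_d_eq in Hi'.
    pose proof (pow2_ge_0 (V i - a)). split; nra. }
  assert (Hsd : 0 < sqrt (b - a)) by (apply sqrt_lt_R0; lra).
  assert (HIm : Im_mV N V a ((b - a) / 2) <= CV * sqrt (b - a)).
  { apply Rle_trans with (CV * sqrt ((b - a) / 2)); [apply neg_Im_le_sqrt; lra|].
    apply Rmult_le_compat_l; [lra|]. apply sqrt_le_1_alt. lra. }
  assert (Hq : Rpower (b - a) (p - 2) = Rpower ((b - a) / 4) (p - 2) * Rpower 4 (p - 2)).
  { rewrite Rpower_mult_distr by lra. f_equal. field. }
  replace (p - 3/2) with (p - 2 + / 2) by field.
  rewrite Rpower_add_half, Hq by lra. unfold neg_upper_const.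
  pose proof (Rpower_pos ((b - a) / 4) (p - 2)). pose proof (Rpower_pos 4 (p - 2)).
  replace (10 * CV * Rpower 4 (p - 2)
           * / (Rpower ((b - a) / 4) (p - 2) * Rpower 4 (p - 2) * sqrt (b - a)))
    with (/ Rpower ((b - a) / 4) (p - 2) * (5 / ((b - a) / 2)) * (CV * sqrt (b - a))).
  2:{ rewrite <- (sqrt_sqrt (b - a)) at 2 by lra. field. repeat split; lra. }
  apply Rmult_le_compat_l; [|exact HIm].
  left. apply Rmult_lt_0_compat; [apply Rinv_0_lt_compat|apply Rdiv_lt_0_compat]; lra.
Qed.

Lemma moment_ge_neg_near : K * d <= 20 ->
  / Rpower d (p - 3/2) / (24 * CV * Rpower (sqrt (K ^ 2 / 4 + 1)) p) <= moment N V p a b.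
Proof.
  intros HKd. pose proof neg_d_ge as Hd.
  assert (HK : 64 <= K) by apply dilation_ge_64, HCV.
  assert (Hda : - a <= d /\ b <= d /\ d <= 11) by (rewrite neg_d_eq; lra).
  set (S := sqrt d). set (A := Rpower (sqrt (K ^ 2 / 4 + 1)) p).
  set (P := Rpower d (p - 3/2)). set (M := moment N V p a b).
  assert (HS : 0 < S) by (apply sqrt_lt_R0; lra).
  assert (HA : 0 < A) by apply Rpower_pos. assert (HP : 0 < P) by apply Rpower_pos.
  assert (HR : 0 < sqrt (K ^ 2 / 4 + 1)) by (apply sqrt_lt_R0; nra).
  assert (HRb : (K * (d / 2)) ^ 2 + b ^ 2 <= (sqrt (K ^ 2 / 4 + 1) * d) ^ 2).
  { rewrite !Rpow_mult_distr, pow2_sqrt by nra. nra. }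
  pose proof (Im_mV_le_dilate_moment N V a b neg_dist_gt0 (d / 2) K
    (sqrt (K ^ 2 / 4 + 1) * d) p ltac:(lra) ltac:(lra) ltac:(nra) ltac:(lra) HRb) as Hsplit.
  rewrite <- Rpower_mult_distr in Hsplit by lra.
  replace (Rpower d p) with (P * d * S) in Hsplit
    by (unfold P, S; rewrite <- Rpower_add_1, <- Rpower_add_half by lra; f_equal; field).
  fold A M in Hsplit.
  assert (Hlow : / (3 * CV) * S <= Im_mV N V a (d / 2)).
  { destruct (neg_Im_bounds (d / 2)) as [Hl _]; [lra|].
    apply Rle_trans with (2 := Hl).
    assert (Hsq : sqrt (- a + d / 2) <= 3 / 2 * S) by (apply sqrt_le_mul_sqrt; lra).
    assert (0 < sqrt (- a + d / 2)) by (apply sqrt_lt_R0; lra).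
    replace (/ (3 * CV) * S) with (/ CV * (S / 3)) by (field; lra).
    apply Rmult_le_compat_l; [left; apply Rinv_0_lt_compat; lra|].
    apply Rle_div_of_mul_le; [lra|].
    apply Rle_trans with (S / 3 * (3 / 2 * S)); [apply Rmult_le_compat_l; lra|].
    replace (S / 3 * (3 / 2 * S)) with (S * S / 2) by field.
    unfold S. rewrite sqrt_sqrt by lra. lra. }
  assert (Hdil : 2 / K * Im_mV N V a (K * (d / 2)) <= / (4 * CV) * S).
  { assert (sqrt (K * (d / 2)) <= 8 * CV ^ 2 * S).
    { apply sqrt_le_mul_sqrt; [nra|lra|].
      replace ((8 * CV ^ 2) ^ 2) with K by (unfold K, dilation; ring). nra. }
    apply Rle_trans with (2 / K * (CV * (8 * CV ^ 2 * S))).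
    - apply Rmult_le_compat_l; [left; apply Rdiv_lt_0_compat; lra|].
      apply Rle_trans with (CV * sqrt (K * (d / 2))); [apply neg_Im_le_sqrt; nra|].
      apply Rmult_le_compat_l; lra.
    - right. unfold K, dilation. field. lra. }
  assert (HSM : S <= A * (P * d * S) / (d / 2) * M / (/ (3 * CV) - / (4 * CV))).
  { apply le_div_of_absorb; [apply Rinv_lt_contravar; nra|lra]. }
  replace (A * (P * d * S) / (d / 2) * M / (/ (3 * CV) - / (4 * CV))) with
    (S * (24 * CV * A * P * M)) in HSM by (field; lra).
  apply Rdiv_le_of_le_mul; [nra|].
  replace (/ P) with (1 / P) by (field; lra). apply Rdiv_le_of_le_mul; [exact HP|].
  assert (1 <= 24 * CV * A * P * M) by nra.
  nra.
Qed.

Lemma moment_ge_neg_far : 20 < K * d ->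
  / Rpower d (p - 3/2) / (far_const CV p / Rpower (20 / K) (p - 3/2)) <= moment N V p a b.
Proof.
  intros HKd. pose proof neg_d_ge as Hd.
  assert (HK : 64 <= K) by apply dilation_ge_64, HCV.
  assert (HF : 0 < far_const CV p) by (apply far_const_pos; lra).
  apply Rdiv_Rdiv_le with (k := 1); [apply Rpower_pos|exact HF| |].
  - replace (1 / Rpower (20 / K) (p - 3/2)) with (/ Rpower (20 / K) (p - 3/2))
      by (field; apply Rgt_not_eq, Rpower_pos).
    apply Rinv_le_contravar; [apply Rpower_pos|].
    apply Rle_Rpower_l; [lra|split; [apply Rdiv_lt_0_compat; lra|]].
    apply Rdiv_le_of_le_mul; lra.
  - apply Rle_trans with (20 / far_const CV p).
    { unfold Rdiv. apply Rmult_le_compat_r; [left; now apply Rinv_0_lt_compat|lra]. }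
    apply moment_ge_far; [exact HN|exact neg_dist_gt0|lra|lra|nra|].
    destruct (neg_Im_bounds 10) as [Hlow _]; [lra|].
    assert (Hsq : sqrt (- a + 10) <= 10 / 3).
    { rewrite <- (sqrt_pow2 (10 / 3)) by lra. apply sqrt_le_1_alt. lra. }
    assert (0 < sqrt (- a + 10)) by (apply sqrt_lt_R0; lra).
    apply Rle_trans with (2 := Hlow). unfold Rdiv at 1. rewrite Rmult_comm.
    apply Rmult_le_compat_l; [left; apply Rinv_0_lt_compat; lra|].
    apply Rle_div_of_mul_le; [lra|]. nra.
Qed.

Lemma moment_ge_neg : / Rpower d (p - 3/2) / neg_lower_const CV p <= moment N V p a b.
Proof.
  apply Rdiv_add_le.
  - left. apply Rinv_0_lt_compat, Rpower_pos.
  - apply Rmult_lt_0_compat; [lra|apply Rpower_pos].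
  - apply Rdiv_lt_0_compat; [apply far_const_pos; lra|apply Rpower_pos].
  - destruct (Rle_lt_dec (K * d) 20).
    + left. now apply moment_ge_neg_near.
    + right. now apply moment_ge_neg_far.
Qed.

Lemma moment_asymp_neg C : neg_upper_const CV p <= C -> neg_lower_const CV p <= C ->
  asymp C (moment N V p a b) (/ Rpower (Rabs a + b) (p - 3/2)).
Proof.
  intros HC1 HC2. apply asymp_of_bounds with (neg_lower_const CV p) (neg_upper_const CV p);
    auto using moment_le_neg, moment_ge_neg.
  - left. apply Rinv_0_lt_compat, Rpower_pos.
  - split; [apply neg_lower_const_pos; lra|exact HC2].
Qed.

End NegativeSide.

Lemma eta_star_pos N phi : 0 < eta_star N phi.
Proof. apply Rpower_pos. Qed.

Lemma eta_star_le_1 N phi : (0 < N)%nat -> 0 <= phi -> eta_star N phi <= 1.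
Proof.
  intros HN Hphi. unfold eta_star.
  rewrite <- (Rpower_O (INR N)) by (apply lt_0_INR; lia).
  apply Rle_Rpower; [apply (le_INR 1); lia|lra].
Qed.

Lemma regular_CV_ge_1 N phi CV V :
  0 < CV -> (0 < N)%nat -> 0 <= phi -> regular N phi CV V -> 1 <= CV.
Proof.
  intros HCV HN Hphi (_ & Hneg & _).
  pose proof (eta_star_le_1 N phi HN Hphi).
  destruct (Hneg 0 10) as [Hl Hu]; [lra|lra|].
  rewrite Rabs_R0, Rplus_0_l in Hl, Hu.
  assert (Hx : 0 < 10 / sqrt 10) by (apply Rdiv_lt_0_compat; [lra|apply sqrt_lt_R0; lra]).
  assert (HinvCV : / CV <= CV) by (apply Rmult_le_reg_r with (10 / sqrt 10); lra).
  destruct (Rlt_le_dec CV 1) as [Hlt|]; [|lra].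
  assert (1 < / CV) by (rewrite <- Rinv_1; apply Rinv_lt_contravar; lra). lra.
Qed.

Lemma InDstar_nonneg es a b : 0 < es -> 0 <= a -> InDstar es a b ->
  a <= 3/4 /\ sqrt es * sqrt a + es <= b <= 10.
Proof.
  intros Hes Ha [[HE Heta]|[[HE Heta]|[HE Heta]]].
  - assert (a = 0) as -> by lra. rewrite sqrt_0, Rmult_0_r. lra.
  - rewrite Rabs_right in Heta by lra. lra.
  - lra.
Qed.

Lemma InDstar_neg es a b : 0 < es -> a < 0 -> InDstar es a b ->
  -3/4 <= a /\ 0 <= b <= 10 /\ (2 * es <= b \/ a <= - 2 * es).
Proof. intros Hes Ha [[HE Heta]|[[HE Heta]|[HE Heta]]]; lra. Qed.

Lemma inv_Rpower_eq_sqrt_div x q : 0 < x -> / Rpower x (q - 3/2) = sqrt x / Rpower x (q - 1).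
Proof.
  intros Hx. replace (q - 1) with (q - 3/2 + / 2) by field.
  rewrite Rpower_add_half by exact Hx.
  pose proof (Rpower_pos x (q - 3/2)). assert (0 < sqrt x) by now apply sqrt_lt_R0.
  field. lra.
Qed.

Theorem lemmaC1 (CV p : R) :
  0 < CV -> 2 <= p ->
  exists C : R, 0 < C /\
    forall (N : nat) (phi : R) (V : nat -> R),
      (0 < N)%nat -> 0 < phi <= 2/3 ->
      regular N phi CV V ->
      forall a b : R, InDstar (eta_star N phi) a b ->
        (0 <= a -> asymp C (moment N V p a b) (sqrt (a + b) / Rpower b (p - 1))) /\
        (a <= 0 -> asymp C (moment N V p a b) (/ Rpower (Rabs a + b) (p - 3/2))).
Proof.
  intros HCV0 Hp.
  pose proof (pos_lower_const_pos CV p HCV0). pose proof (neg_lower_const_pos CV p HCV0).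
  pose proof (neg_upper_const_pos CV p HCV0).
  set (C := CV + pos_lower_const CV p + neg_upper_const CV p + neg_lower_const CV p).
  exists C. split; [unfold C; lra|]. intros N phi V HN Hphi Hreg a b HD.
  pose proof (regular_CV_ge_1 N phi CV V HCV0 HN ltac:(lra) Hreg) as HCV.
  pose proof (eta_star_pos N phi) as Hes.
  destruct Hreg as (_ & Hneg & Hpos & Hgap & _).
  assert (Hcase_pos :
    0 <= a -> asymp C (moment N V p a b) (sqrt (a + b) / Rpower b (p - 1))).
  { intros Ha. destruct (InDstar_nonneg _ a b Hes Ha HD) as [Ha' Hb].
    eapply moment_asymp_pos; eauto; unfold C; lra. }
  split; [exact Hcase_pos|]. intros Ha.
  destruct (Req_dec a 0) as [->|Ha0].
  - destruct (InDstar_nonneg _ 0 b Hes (Rle_refl 0) HD) as [_ Hb].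
    rewrite sqrt_0, Rmult_0_r in Hb.
    rewrite Rabs_R0, Rplus_0_l, inv_Rpower_eq_sqrt_div by lra.
    replace (sqrt b) with (sqrt (0 + b)) by (now rewrite Rplus_0_l).
    apply Hcase_pos; lra.
  - destruct (InDstar_neg _ a b Hes ltac:(lra) HD) as (Ha' & Hb & Hdom).
    eapply moment_asymp_neg; eauto; unfold C; lra.
Qed.
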